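(* Let $H=(v_1,\dots,v_6)$ be an embedded equilateral hexagon in standard position whose action-angle coordinates $(d_1,d_2,d_3,\theta_1,\theta_2,\theta_3)$ for the $T_{135}$ triangulation are defined, and let $d=\sqrt{2d_1^2d_2^2+2d_1^2d_3^2+2d_2^2d_3^2-d_1^4-d_2^4-d_3^4}$. If $J(H)=(1,1)$, then the following nine quantities are all positive: \begin{align*} f_1= & d_2\sqrt{4-d_2^2}\sin\theta_2\big(d_3d-(d_1^2-d_2^2+d_3^2)\sqrt{4-d_3^2}\cos\theta_3\big)- d_3\sqrt{4-d_3^2}\sin\theta_3\big(d_2d-(d_1^2+d_2^2-d_3^2)\sqrt{4-d_2^2}\cos\theta_2\big),\\ g_1= & \sqrt{4-d_2^2}\Big(\tfrac{-d_1^2+d_2^2+d_3^2}{2d_2 d_3}\cos\theta_2\sin\theta_3+\sin\theta_2\cos\theta_3\Big)-\tfrac{d\sin\theta_3}{2d_3},\\ h_1= & \sqrt{4-d_3^2}\Big(\tfrac{-d_1^2+d_2^2+d_3^2}{2d_2 d_3}\cos\theta_3\sin\theta_2+\sin\theta_3\cos\theta_2\Big)-\tfrac{d\sin\theta_2}{2d_2},\\ f_2 = & d_3\sqrt{4-d_3^2}\sin\theta_3\big(d_1d-(d_1^2+d_2^2-d_3^2)\sqrt{4-d_1^2}\cos\theta_1\big)- d_1\sqrt{4-d_1^2}\sin\theta_1\big(d_3d-(-d_1^2+d_2^2+d_3^2)\sqrt{4-d_3^2}\cos\theta_3\big),\\ g_2 = &\sqrt{4-d_3^2}\Big(\tfrac{d_1^2-d_2^2+d_3^2}{2d_1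 d_3}\cos\theta_3\sin\theta_1+\sin\theta_3\cos\theta_1\Big)-\tfrac{d\sin\theta_1}{2d_1},\\ h_2 = &\sqrt{4-d_1^2}\Big(\tfrac{d_1^2-d_2^2+d_3^2}{2d_1 d_3}\cos\theta_1\sin\theta_3+\sin\theta_1\cos\theta_3\Big)-\tfrac{d\sin\theta_3}{2d_3},\\ f_3 = & d_1\sqrt{4-d_1^2}\sin\theta_1\big(d_2d-(-d_1^2+d_2^2+d_3^2)\sqrt{4-d_2^2}\cos\theta_2\big)-d_2\sqrt{4-d_2^2}\sin\theta_2\big(d_1d-(d_1^2-d_2^2+d_3^2)\sqrt{4-d_1^2}\cos\theta_1\big),\\ g_3 = &\sqrt{4-d_1^2}\Big(\tfrac{d_1^2+d_2^2-d_3^2}{2d_1 d_2}\cos\theta_1\sin\theta_2+\sin\theta_1\cos\theta_2\Big)-\tfrac{d\sin\theta_2}{2d_2},\\ h_3 = &\sqrt{4-d_2^2}\Big( \tfrac{d_1^2+d_2^2-d_3^2}{2d_1 d_2}\cos\theta_2\sin\theta_1+\sin\theta_2\cos\theta_1\Big)-\tfrac{d\sin\theta_1}{2d_1}. \end{align*}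
   Context: An equilateral hexagon is an ordered 6-tuple $H=(v_1,\dots,v_6)$ in $\mathbb{R}^3$ with $\|v_i-v_{i+1}\|=1$ (indices mod 6), edges $e_i=[v_i,v_{i+1}]$, oriented $v_1\to v_2\to\cdots\to v_6\to v_1$; embedded means non-adjacent edges are disjoint and adjacent ones meet only at their common endpoint. Standard position: $v_1=0$, $v_3$ on the positive $x$-axis, $v_5$ in the $xy$-plane with positive $y$-coordinate. Action-angle coordinates ($T_{135}$ triangulation), defined when $v_1,v_3,v_5$ are not collinear and $0<d_i<2$: $d_1=\|v_3-v_1\|$, $d_2=\|v_5-v_3\|$, $d_3=\|v_1-v_5\|$; with $m_1,m_2,m_3$ the midpoints of $[v_1,v_3],[v_3,v_5],[v_5,v_1]$, $u_1,u_2,u_3$ the unit vectors in the $xy$-plane perpendicular to these segments pointing toward the opposite vertex of triangle $v_1v_3v_5$ (toward $v_5,v_1,v_3$ respectively), and $e_z=(0,0,1)$, the angles $\theta_i\in[0,2\pi)$ are determined by $v_{2i}=m_i+\tfrac12\sqrt{4-d_i^2}(\cos\theta_i\,u_i+\sin\theta_i\,e_z)$ (regular planar hexagon: all $\theta_i=\pi$). Explicitly $v_3=(d_1,0,0)$, $v_5=\big(\tfrac{d_1^2-d_2^2+d_3^2}{2d_1},\tfrac{d}{2d_1},0\big)$, $v_2=\big(\tfrac{d_1}{2},\tfrac12\sqrt{4-d_1^2}\cos\theta_1,\tfrac12\sqrt{4-d_1^2}\sin\theta_1\big)$. Joint Chirality-Curl: $curl(H)=\operatorname{sign}\big((v_3-v_1)\times(v_5-v_1)\cdot(v_2-v_1)\big)$.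 For $i=2,4,6$, $T_i$ is the open triangular disk with vertices $v_{i-1},v_i,v_{i+1}$, oriented by the right-hand rule (normal $(v_i-v_{i-1})\times(v_{i+1}-v_i)$), and $\Delta_i$ is the algebraic intersection number of $T_i$ with the oriented polygon $H$. Then $J(H)=(\Delta_2\Delta_4\Delta_6,\ \Delta_2^2\Delta_4^2\Delta_6^2\,curl(H))$. *)

From Stdlib Require Import Reals Lra Lia ZArith Classical ClassicalEpsilon.
Open Scope R_scope.

Record pt := Pt { px : R; py : R; pz : R }.

Definition vadd (a b : pt) : pt := Pt (px a + px b) (py a + py b) (pz a + pz b).
Definition vsub (a b : pt) : pt := Pt (px a - px b) (py a - py b) (pz a - pz b).
Definition vscal (k : R) (a : pt) : pt := Pt (k * px a) (k * py a) (k * pz a).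
Definition dot (a b : pt) : R := px a * px b + py a * py b + pz a * pz b.
Definition cross (a b : pt) : pt :=
  Pt (py a * pz b - pz a * py b) (pz a * px b - px a * pz b) (px a * py b - py a * px b).
Definition vnorm (a : pt) : R := sqrt (dot a a).
Definition pdist (a b : pt) : R := vnorm (vsub a b).
Definition ez : pt := Pt 0 0 1.
Definition origin : pt := Pt 0 0 0.

Definition on_seg (a b p : pt) : Prop :=
  exists t, 0 <= t <= 1 /\ p = vadd a (vscal t (vsub b a)).

Definition in_open_tri (a b c p : pt) : Prop :=
  exists s t, 0 < s /\ 0 < t /\ s + t < 1 /\
    p = vadd a (vadd (vscal s (vsub b a)) (vscal t (vsub c a))).

Definition collinear (a b c : pt) : Prop :=
  cross (vsub b a) (vsub c a) = origin.

(** Hexagons: ordered 6-tuples; vertex index i is taken mod 6, with v_6 = v_0. *)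
Record hexagon := Hex { h1 : pt; h2 : pt; h3 : pt; h4 : pt; h5 : pt; h6 : pt }.

Definition vert (H : hexagon) (i : nat) : pt :=
  match Nat.modulo i 6 with
  | 1%nat => h1 H | 2%nat => h2 H | 3%nat => h3 H
  | 4%nat => h4 H | 5%nat => h5 H | _ => h6 H
  end.

Definition equilateral (H : hexagon) : Prop :=
  forall i : nat, (1 <= i <= 6)%nat -> pdist (vert H i) (vert H (S i)) = 1.

(** Edge e_i = [v_i, v_{i+1}].  Embedded: non-adjacent edges disjoint,
    adjacent edges meet only at the common endpoint. *)
Definition on_edge (H : hexagon) (i : nat) (p : pt) : Prop :=
  on_seg (vert H i) (vert H (S i)) p.

Definition embedded (H : hexagon) : Prop :=
  (forall i j : nat, (1 <= i <= 6)%nat -> (1 <= j <= 6)%nat ->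
     let k := Nat.modulo (j + 6 - i) 6 in
     (k = 2 \/ k = 3 \/ k = 4)%nat ->
     ~ exists p, on_edge H i p /\ on_edge H j p)
  /\
  (forall i : nat, (1 <= i <= 6)%nat ->
     forall p, on_edge H i p -> on_edge H (S i) p -> p = vert H (S i)).

Definition standard_position (H : hexagon) : Prop :=
  h1 H = origin /\
  py (h3 H) = 0 /\ pz (h3 H) = 0 /\ 0 < px (h3 H) /\
  pz (h5 H) = 0 /\ 0 < py (h5 H).

Definition perp_toward (a b c : pt) : pt :=
  let w := vsub (vsub c a)
             (vscal (dot (vsub c a) (vsub b a) / dot (vsub b a) (vsub b a)) (vsub b a)) in
  vscal (/ vnorm w) w.

Definition midpoint (a b : pt) : pt := vscal (1/2) (vadd a b).

(** The defining relation of the angle theta_i: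
    v_{2i} = m_i + 1/2 sqrt(4 - d_i^2) (cos theta u_i + sin theta e_z),
    where segment [a,b] has midpoint m_i and opposite vertex c. *)
Definition angle_rel (a b c v : pt) (th : R) : Prop :=
  let di := pdist b a in
  v = vadd (midpoint a b)
        (vscal (/2 * sqrt (4 - di ^ 2))
           (vadd (vscal (cos th) (perp_toward a b c)) (vscal (sin th) ez))).

Definition sgnZ (x : R) : Z :=
  if Rlt_dec 0 x then 1%Z else if Rlt_dec x 0 then (-1)%Z else 0%Z.

Definition curl (H : hexagon) : Z :=
  sgnZ (dot (cross (vsub (h3 H) (h1 H)) (vsub (h5 H) (h1 H))) (vsub (h2 H) (h1 H))).

Definition bool_of (P : Prop) : bool :=
  if excluded_middle_informative P then true else false.

(** Signed contribution of the oriented segment [a,b] to the algebraic intersection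
    number with the open triangle (p0,p1,p2), oriented by n = (p1-p0) x (p2-p1).
    Heights ha, hb relative to the plane; a crossing point is counted +1 when
    ha < 0 <= hb and -1 when hb < 0 <= ha (half-open convention, so that a
    vertex lying in the triangle is counted once, and tangential touches count 0),
    provided the crossing point lies in the open triangle. *)
Definition seg_tri_sign (p0 p1 p2 a b : pt) : Z :=
  let n := cross (vsub p1 p0) (vsub p2 p1) in
  let ha := dot n (vsub a p1) in
  let hb := dot n (vsub b p1) in
  let q := vadd a (vscal (ha / (ha - hb)) (vsub b a)) in
  if bool_of (in_open_tri p0 p1 p2 q) then
    (if Rlt_dec ha 0 then (if Rle_dec 0 hb then 1%Z else 0%Z)
     else if Rlt_dec hb 0 then (if Rle_dec 0 ha then (-1)%Z else 0%Z)
     else 0%Z)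
  else 0%Z.

(** Delta_i : algebraic intersection number of T_i (vertices v_{i-1}, v_i, v_{i+1})
    with the oriented hexagon (sum over its six oriented edges). *)
Definition Delta (H : hexagon) (i : nat) : Z :=
  let p0 := vert H (i + 5) in
  let p1 := vert H i in
  let p2 := vert H (S i) in
  (seg_tri_sign p0 p1 p2 (h1 H) (h2 H) + seg_tri_sign p0 p1 p2 (h2 H) (h3 H) +
   seg_tri_sign p0 p1 p2 (h3 H) (h4 H) + seg_tri_sign p0 p1 p2 (h4 H) (h5 H) +
   seg_tri_sign p0 p1 p2 (h5 H) (h6 H) + seg_tri_sign p0 p1 p2 (h6 H) (h1 H))%Z.

Definition JCC (H : hexagon) : Z * Z :=
  let D2 := Delta H 2 in let D4 := Delta H 4 in let D6 := Delta H 6 in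
  ((D2 * D4 * D6)%Z, (D2 ^ 2 * D4 ^ 2 * D6 ^ 2 * curl H)%Z).

Definition dd (d1 d2 d3 : R) : R :=
  sqrt (2 * d1^2 * d2^2 + 2 * d1^2 * d3^2 + 2 * d2^2 * d3^2 - d1^4 - d2^4 - d3^4).


Definition f1 (d1 d2 d3 t1 t2 t3 : R) : R :=
  let d := dd d1 d2 d3 in let s1 := sqrt (4 - d1^2) in
  let s2 := sqrt (4 - d2^2) in let s3 := sqrt (4 - d3^2) in
  d2 * s2 * sin t2 * (d3 * d - (d1^2 - d2^2 + d3^2) * s3 * cos t3)
  - d3 * s3 * sin t3 * (d2 * d - (d1^2 + d2^2 - d3^2) * s2 * cos t2).
Definition g1 (d1 d2 d3 t1 t2 t3 : R) : R :=
  let d := dd d1 d2 d3 in let s1 := sqrt (4 - d1^2) in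
  let s2 := sqrt (4 - d2^2) in let s3 := sqrt (4 - d3^2) in
  s2 * ((- d1^2 + d2^2 + d3^2) / (2 * d2 * d3) * cos t2 * sin t3 + sin t2 * cos t3)
  - d * sin t3 / (2 * d3).
Definition hh1 (d1 d2 d3 t1 t2 t3 : R) : R :=
  let d := dd d1 d2 d3 in let s1 := sqrt (4 - d1^2) in
  let s2 := sqrt (4 - d2^2) in let s3 := sqrt (4 - d3^2) in
  s3 * ((- d1^2 + d2^2 + d3^2) / (2 * d2 * d3) * cos t3 * sin t2 + sin t3 * cos t2)
  - d * sin t2 / (2 * d2).
Definition f2 (d1 d2 d3 t1 t2 t3 : R) : R :=
  let d := dd d1 d2 d3 in let s1 := sqrt (4 - d1^2) in
  let s2 := sqrt (4 - d2^2) in let s3 := sqrt (4 - d3^2) in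
  d3 * s3 * sin t3 * (d1 * d - (d1^2 + d2^2 - d3^2) * s1 * cos t1)
  - d1 * s1 * sin t1 * (d3 * d - (- d1^2 + d2^2 + d3^2) * s3 * cos t3).
Definition g2 (d1 d2 d3 t1 t2 t3 : R) : R :=
  let d := dd d1 d2 d3 in let s1 := sqrt (4 - d1^2) in
  let s2 := sqrt (4 - d2^2) in let s3 := sqrt (4 - d3^2) in
  s3 * ((d1^2 - d2^2 + d3^2) / (2 * d1 * d3) * cos t3 * sin t1 + sin t3 * cos t1)
  - d * sin t1 / (2 * d1).
Definition hh2 (d1 d2 d3 t1 t2 t3 : R) : R :=
  let d := dd d1 d2 d3 in let s1 := sqrt (4 - d1^2) in
  let s2 := sqrt (4 - d2^2) in let s3 := sqrt (4 - d3^2) in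
  s1 * ((d1^2 - d2^2 + d3^2) / (2 * d1 * d3) * cos t1 * sin t3 + sin t1 * cos t3)
  - d * sin t3 / (2 * d3).
Definition f3 (d1 d2 d3 t1 t2 t3 : R) : R :=
  let d := dd d1 d2 d3 in let s1 := sqrt (4 - d1^2) in
  let s2 := sqrt (4 - d2^2) in let s3 := sqrt (4 - d3^2) in
  d1 * s1 * sin t1 * (d2 * d - (- d1^2 + d2^2 + d3^2) * s2 * cos t2)
  - d2 * s2 * sin t2 * (d1 * d - (d1^2 - d2^2 + d3^2) * s1 * cos t1).
Definition g3 (d1 d2 d3 t1 t2 t3 : R) : R :=
  let d := dd d1 d2 d3 in let s1 := sqrt (4 - d1^2) in
  let s2 := sqrt (4 - d2^2) in let s3 := sqrt (4 - d3^2) in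
  s1 * ((d1^2 + d2^2 - d3^2) / (2 * d1 * d2) * cos t1 * sin t2 + sin t1 * cos t2)
  - d * sin t2 / (2 * d2).
Definition hh3 (d1 d2 d3 t1 t2 t3 : R) : R :=
  let d := dd d1 d2 d3 in let s1 := sqrt (4 - d1^2) in
  let s2 := sqrt (4 - d2^2) in let s3 := sqrt (4 - d3^2) in
  s2 * ((d1^2 + d2^2 - d3^2) / (2 * d1 * d2) * cos t2 * sin t1 + sin t2 * cos t1)
  - d * sin t1 / (2 * d1).

(* Write [a b c x] for the signed volume ((b - a) x (c - a)) . (x - a). If the edge [a,b]
   meets the open triangle (p0,p1,p2) at p0 + s (p1 - p0) + t (p2 - p0), then
   [p0 p1 a b] = t (h b - h a) and [a b p1 p2] = (1 - s - t) (h b - h a), h being the height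
   over the plane of the triangle; a crossing counted +1 has h a < 0 <= h b, so both volumes
   are positive. The edges adjacent to T_i never count, so Delta_i only sees the two opposite
   edges. Heights over the plane v1 v3 v5 are affine along a crossing, and curl = 1 puts v2
   above that plane; from there the crossings propagate around the hexagon: Delta_2 = 1 forces
   [v4,v5], [v6,v1], [v2,v3] to cross T_2, T_4, T_6 positively, while Delta_2 = -1 forces every
   Delta_i = -1, against Delta_2 Delta_4 Delta_6 = 1. In the planar triangle v1 v3 v5, f_3, g_3
   and h_3 are positive multiples of [v1 v2 v4 v5], [v4 v5 v2 v3] and -[v1 v2 v3 v4], and the
   other six quantities are their images under v_i -> v_{i+2}. *)

From Pilot Require Import Defs.
From Stdlib Require Import Reals ZArith Lra Lia Psatz ClassicalEpsilon.
Open Scope R_scope.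

Definition signed_vol (a b c x : pt) : R := dot (cross (vsub b a) (vsub c a)) (vsub x a).

Ltac vec_ring :=
  repeat match goal with p : pt |- _ => destruct p end;
  unfold signed_vol, dot, cross, vsub, vadd, vscal; simpl; ring.

Lemma signed_vol_at_a a b c : signed_vol a b c a = 0.
Proof. vec_ring. Qed.

Lemma signed_vol_at_b a b c : signed_vol a b c b = 0.
Proof. vec_ring. Qed.

Lemma signed_vol_at_c a b c : signed_vol a b c c = 0.
Proof. vec_ring. Qed.

Lemma signed_vol_rot a b c x : signed_vol b c a x = signed_vol a b c x.
Proof. vec_ring. Qed.

Lemma signed_vol_perm a b c x : signed_vol a x b c = signed_vol a b c x.
Proof. vec_ring. Qed.

Lemma signed_vol_cycle a b c x : signed_vol b c x a = - signed_vol a b c x.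
Proof. vec_ring. Qed.

Lemma seg_tri_height p0 p1 p2 x :
  dot (cross (vsub p1 p0) (vsub p2 p1)) (vsub x p1) = signed_vol p0 p1 p2 x.
Proof. vec_ring. Qed.

Definition crosses_at (p0 p1 p2 a b : pt) (lam s t : R) : Prop :=
  0 <= lam <= 1 /\ 0 < s /\ 0 < t /\ s + t < 1 /\
  vadd a (vscal lam (vsub b a)) = vadd p0 (vadd (vscal s (vsub p1 p0)) (vscal t (vsub p2 p0))).

Lemma crosses_at_height p0 p1 p2 a b lam s t o u w :
  crosses_at p0 p1 p2 a b lam s t ->
  signed_vol o u w a + lam * (signed_vol o u w b - signed_vol o u w a) =
  signed_vol o u w p0 + s * (signed_vol o u w p1 - signed_vol o u w p0)
    + t * (signed_vol o u w p2 - signed_vol o u w p0).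
Proof.
  intros (_ & _ & _ & _ & E).
  transitivity (signed_vol o u w (vadd a (vscal lam (vsub b a)))); [|rewrite E]; vec_ring.
Qed.

Lemma crosses_at_vol_edge p0 p1 p2 a b lam s t :
  crosses_at p0 p1 p2 a b lam s t ->
  signed_vol p0 p1 a b = t * (signed_vol p0 p1 p2 b - signed_vol p0 p1 p2 a).
Proof.
  intros (_ & _ & _ & _ & E).
  transitivity (signed_vol p0 p1 (vadd a (vscal lam (vsub b a))) b
                + signed_vol p0 p1 a (vadd a (vscal lam (vsub b a)))); [vec_ring|].
  rewrite E; vec_ring.
Qed.

Lemma crosses_at_vol_opp p0 p1 p2 a b lam s t :
  crosses_at p0 p1 p2 a b lam s t ->
  signed_vol a b p1 p2 = (1 - s - t) * (signed_vol p0 p1 p2 b - signed_vol p0 p1 p2 a).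
Proof.
  intros (_ & _ & _ & _ & E).
  transitivity (signed_vol (vadd a (vscal lam (vsub b a))) b p1 p2
                + signed_vol a (vadd a (vscal lam (vsub b a))) p1 p2); [vec_ring|].
  rewrite E; vec_ring.
Qed.

Lemma div_unit_interval x y : 0 <= x <= y \/ y <= x <= 0 -> y <> 0 -> 0 <= x / y <= 1.
Proof.
  intros Hxy Hy. assert (E : x = x / y * y) by (field; exact Hy).
  destruct Hxy; split; nra.
Qed.

Lemma seg_tri_sign_spec p0 p1 p2 a b :
  seg_tri_sign p0 p1 p2 a b = 0%Z \/
  (seg_tri_sign p0 p1 p2 a b = 1%Z /\
   signed_vol p0 p1 p2 a < 0 <= signed_vol p0 p1 p2 b /\
   exists lam s t, crosses_at p0 p1 p2 a b lam s t) \/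
  (seg_tri_sign p0 p1 p2 a b = (-1)%Z /\
   signed_vol p0 p1 p2 b < 0 <= signed_vol p0 p1 p2 a /\
   exists lam s t, crosses_at p0 p1 p2 a b lam s t).
Proof.
  unfold seg_tri_sign, bool_of; cbv zeta; rewrite !seg_tri_height.
  set (ha := signed_vol p0 p1 p2 a); set (hb := signed_vol p0 p1 p2 b).
  destruct (excluded_middle_informative _) as [(s & t & Hs & Ht & Hst & E)|]; [|now left].
  repeat match goal with |- context [if ?c then _ else _] => destruct c end;
    try (now left); right; [left | right];
    (split; [reflexivity | split; [lra|]]);
    exists (ha / (ha - hb)), s, t; repeat split; auto; apply div_unit_interval; lra.
Qed.

Lemma seg_tri_sign_pos_vols p0 p1 p2 a b :
  seg_tri_sign p0 p1 p2 a b = 1%Z ->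
  signed_vol p0 p1 p2 a < 0 /\ 0 < signed_vol p0 p1 a b /\ 0 < signed_vol a b p1 p2.
Proof.
  intros Hk.
  destruct (seg_tri_sign_spec p0 p1 p2 a b) as [E|[(_ & Hh & lam & s & t & Hc)|(E & _)]];
    [rewrite Hk in E; discriminate | | rewrite Hk in E; discriminate].
  rewrite (crosses_at_vol_edge _ _ _ _ _ _ _ _ Hc), (crosses_at_vol_opp _ _ _ _ _ _ _ _ Hc).
  destruct Hc as (_ & Hs & Ht & Hst & _).
  split; [lra|]; split; apply Rmult_lt_0_compat; lra.
Qed.

Lemma seg_tri_sign_p0p1 p0 p1 p2 : seg_tri_sign p0 p1 p2 p0 p1 = 0%Z.
Proof.
  destruct (seg_tri_sign_spec p0 p1 p2 p0 p1) as [|[(_ & Hh & _)|(_ & Hh & _)]];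
    [assumption | |]; rewrite ?signed_vol_at_a, ?signed_vol_at_b in Hh; lra.
Qed.

Lemma seg_tri_sign_p1p2 p0 p1 p2 : seg_tri_sign p0 p1 p2 p1 p2 = 0%Z.
Proof.
  destruct (seg_tri_sign_spec p0 p1 p2 p1 p2) as [|[(_ & Hh & _)|(_ & Hh & _)]];
    [assumption | |]; rewrite ?signed_vol_at_b, ?signed_vol_at_c in Hh; lra.
Qed.

Lemma seg_tri_sign_from_p2 p0 p1 p2 x : seg_tri_sign p0 p1 p2 p2 x = 0%Z.
Proof.
  destruct (seg_tri_sign_spec p0 p1 p2 p2 x)
    as [|[(_ & Hh & _)|(_ & Hh & lam & s & t & Hc)]]; [assumption | |];
    rewrite signed_vol_at_c in Hh; [lra|].
  pose proof (crosses_at_vol_edge _ _ _ _ _ _ _ _ Hc) as E.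
  rewrite signed_vol_at_c in E.
  destruct Hc as (_ & Hs & Ht & Hst & _); nra.
Qed.

Lemma seg_tri_sign_to_p0 p0 p1 p2 x : seg_tri_sign p0 p1 p2 x p0 = 0%Z.
Proof.
  destruct (seg_tri_sign_spec p0 p1 p2 x p0)
    as [|[(_ & Hh & lam & s & t & Hc)|(_ & Hh & _)]]; [assumption | |];
    rewrite signed_vol_at_a in Hh; [|lra].
  pose proof (crosses_at_vol_opp _ _ _ _ _ _ _ _ Hc) as E.
  pose proof (signed_vol_cycle x p0 p1 p2) as Ecyc.
  rewrite signed_vol_at_a in E.
  destruct Hc as (_ & Hs & Ht & Hst & _); nra.
Qed.

Lemma Delta2_hex v1 v2 v3 v4 v5 v6 :
  Defs.Delta (Hex v1 v2 v3 v4 v5 v6) 2 =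
  (seg_tri_sign v1 v2 v3 v4 v5 + seg_tri_sign v1 v2 v3 v5 v6)%Z.
Proof.
  unfold Defs.Delta, vert; simpl.
  rewrite seg_tri_sign_p0p1, seg_tri_sign_p1p2, seg_tri_sign_from_p2, seg_tri_sign_to_p0.
  ring.
Qed.

Lemma Delta4_hex v1 v2 v3 v4 v5 v6 :
  Defs.Delta (Hex v1 v2 v3 v4 v5 v6) 4 =
  (seg_tri_sign v3 v4 v5 v6 v1 + seg_tri_sign v3 v4 v5 v1 v2)%Z.
Proof.
  rewrite <- Delta2_hex; unfold Defs.Delta, vert; simpl; ring.
Qed.

Lemma Delta6_hex v1 v2 v3 v4 v5 v6 :
  Defs.Delta (Hex v1 v2 v3 v4 v5 v6) 6 =
  (seg_tri_sign v5 v6 v1 v2 v3 + seg_tri_sign v5 v6 v1 v3 v4)%Z.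
Proof.
  rewrite <- Delta2_hex; unfold Defs.Delta, vert; simpl; ring.
Qed.

Lemma sgnZ_one x : sgnZ x = 1%Z -> 0 < x.
Proof.
  unfold sgnZ; destruct (Rlt_dec 0 x); [auto|].
  destruct (Rlt_dec x 0); discriminate.
Qed.

Lemma JCC_one H :
  JCC H = (1%Z, 1%Z) ->
  0 < signed_vol (h1 H) (h3 H) (h5 H) (h2 H) /\
  (Defs.Delta H 2 * Defs.Delta H 4 * Defs.Delta H 6 = 1)%Z.
Proof.
  unfold JCC; intros E; injection E as Hprod Hcurl.
  split; [|exact Hprod].
  apply sgnZ_one; change (curl H = 1%Z).
  rewrite <- Hcurl; cbn [Z.pow_pos Pos.iter].
  set (P := (Defs.Delta H 2 * Defs.Delta H 4 * Defs.Delta H 6)%Z) in Hprod.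
  transitivity (P * P * curl H)%Z; [rewrite Hprod; ring | unfold P; ring].
Qed.

(* In the hexagon A P B Q C R, the triangle (A,P,B) can only be crossed by [Q,C] and [C,R].
   Heights over the plane A B C are stated in the frame of the next triangle, so that these
   lemmas chain around the hexagon. *)
Section HexagonTriangle.
Variables A P B Q C R : pt.
Hypothesis HP : 0 < signed_vol A B C P.

Lemma tri_crossing_next :
  seg_tri_sign A P B Q C = 0%Z \/
  (seg_tri_sign A P B Q C = 1%Z /\ 0 < signed_vol B C A Q /\ 0 < signed_vol A P Q C).
Proof.
  destruct (seg_tri_sign_spec A P B Q C)
    as [|[(Hk & _ & lam & s & t & Hc)|(_ & Hh & _)]]; [now left | |];
    rewrite ?(signed_vol_perm A B C P) in *; [|lra].
  right; split; [exact Hk|].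
  pose proof (crosses_at_height _ _ _ _ _ _ _ _ A B C Hc) as E.
  rewrite signed_vol_at_a, signed_vol_at_b, signed_vol_at_c in E.
  rewrite (signed_vol_rot A B C Q).
  destruct Hc as (Hlam & Hs & Ht & Hst & _).
  split; [nra|].
  apply seg_tri_sign_pos_vols in Hk; tauto.
Qed.

Lemma tri_crossing_prev :
  seg_tri_sign A P B C R = 0%Z \/
  (seg_tri_sign A P B C R = (-1)%Z /\ 0 < signed_vol C A B R /\ signed_vol C R P B < 0).
Proof.
  destruct (seg_tri_sign_spec A P B C R)
    as [|[(_ & Hh & _)|(Hk & Hh & lam & s & t & Hc)]]; [now left | |];
    rewrite (signed_vol_perm A B C P) in Hh; [lra|].
  right; split; [exact Hk|].
  pose proof (crosses_at_height _ _ _ _ _ _ _ _ A B C Hc) as E.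
  pose proof (crosses_at_vol_opp _ _ _ _ _ _ _ _ Hc) as V.
  rewrite signed_vol_at_a, signed_vol_at_b, signed_vol_at_c in E.
  rewrite (signed_vol_perm A B C P) in V.
  rewrite (signed_vol_rot B C A R), (signed_vol_rot A B C R).
  destruct Hc as (Hlam & Hs & Ht & Hst & _).
  split; nra.
Qed.
End HexagonTriangle.

Lemma tri_crossing_propagate_next A P B Q C R :
  0 < signed_vol A B C P -> seg_tri_sign A P B C R = 0%Z ->
  (seg_tri_sign A P B Q C + seg_tri_sign A P B C R <> 0)%Z ->
  seg_tri_sign A P B Q C = 1%Z /\ 0 < signed_vol B C A Q /\ seg_tri_sign B Q C A P = 0%Z.
Proof.
  intros HP HR Hsum.
  destruct (tri_crossing_next A P B Q C HP) as [HQ|(HQ & HQpos & Hvol)]; [lia|].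
  repeat split; [exact HQ | exact HQpos|].
  destruct (tri_crossing_prev B Q C A P HQpos) as [|(_ & _ & Hvol')]; [assumption | lra].
Qed.

Lemma tri_crossing_propagate_prev A P B Q C R :
  0 < signed_vol A B C P -> seg_tri_sign A P B Q C = 0%Z ->
  (seg_tri_sign A P B Q C + seg_tri_sign A P B C R <> 0)%Z ->
  seg_tri_sign A P B C R = (-1)%Z /\ 0 < signed_vol C A B R /\ seg_tri_sign C R A P B = 0%Z.
Proof.
  intros HP HQ Hsum.
  destruct (tri_crossing_prev A P B C R HP) as [HR|(HR & HRpos & Hvol)]; [lia|].
  repeat split; [exact HR | exact HRpos|].
  destruct (tri_crossing_next C R A P B HRpos) as [|(_ & _ & Hvol')]; [assumption | lra].
Qed.

Lemma hexagon_crossings v1 v2 v3 v4 v5 v6 :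
  0 < signed_vol v1 v3 v5 v2 ->
  ((seg_tri_sign v1 v2 v3 v4 v5 + seg_tri_sign v1 v2 v3 v5 v6) *
   (seg_tri_sign v3 v4 v5 v6 v1 + seg_tri_sign v3 v4 v5 v1 v2) *
   (seg_tri_sign v5 v6 v1 v2 v3 + seg_tri_sign v5 v6 v1 v3 v4) = 1)%Z ->
  seg_tri_sign v1 v2 v3 v4 v5 = 1%Z /\ seg_tri_sign v3 v4 v5 v6 v1 = 1%Z /\
  seg_tri_sign v5 v6 v1 v2 v3 = 1%Z.
Proof.
  intros H2 Hprod.
  assert (Hnz : forall x y z : Z, (x * y * z = 1)%Z -> x <> 0%Z /\ y <> 0%Z /\ z <> 0%Z)
    by (intros x y z E; repeat split; intros ->; lia).
  destruct (Hnz _ _ _ Hprod) as (N2 & N4 & N6).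
  destruct (tri_crossing_prev v1 v2 v3 v5 v6 H2) as [R2|(R2 & _)].
  - destruct (tri_crossing_propagate_next _ _ _ _ _ _ H2 R2 N2) as (Q2 & H4 & R4).
    destruct (tri_crossing_propagate_next _ _ _ _ _ _ H4 R4 N4) as (Q4 & H6 & R6).
    destruct (tri_crossing_propagate_next _ _ _ _ _ _ H6 R6 N6) as (Q6 & _).
    auto.
  - exfalso.
    assert (Q2 : seg_tri_sign v1 v2 v3 v4 v5 = 0%Z)
      by (destruct (tri_crossing_next v1 v2 v3 v4 v5 H2) as [|(Q2 & _)]; lia).
    destruct (tri_crossing_propagate_prev _ _ _ _ _ _ H2 Q2 N2) as (_ & H6 & Q6).
    destruct (tri_crossing_propagate_prev _ _ _ _ _ _ H6 Q6 N6) as (R6 & H4 & Q4).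
    destruct (tri_crossing_propagate_prev _ _ _ _ _ _ H4 Q4 N4) as (R4 & _).
    rewrite Q2, R2, Q4, R4, Q6, R6 in Hprod; discriminate.
Qed.

Definition ccw_xy (a b c : pt) : Prop :=
  pz a = 0 /\ pz b = 0 /\ pz c = 0 /\ 0 < pz (cross (vsub b a) (vsub c a)).

Lemma ccw_xy_rot a b c : ccw_xy a b c -> ccw_xy b c a.
Proof.
  intros (Ha & Hb & Hc & HD); repeat split; auto.
  replace (pz (cross (vsub c b) (vsub a b))) with (pz (cross (vsub b a) (vsub c a)))
    by (unfold cross, vsub; simpl; ring).
  exact HD.
Qed.

Lemma standard_position_ccw_xy H : standard_position H -> ccw_xy (h1 H) (h3 H) (h5 H).
Proof.
  intros (E1 & Hy3 & Hz3 & Hx3 & Hz5 & Hy5); rewrite E1.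
  repeat split; auto.
  unfold cross, vsub, origin; simpl; rewrite Hy3; nra.
Qed.

Lemma pdist_sq x y : pdist x y ^ 2 = dot (vsub x y) (vsub x y).
Proof.
  unfold pdist, vnorm; rewrite pow2_sqrt; [reflexivity|].
  unfold dot; repeat apply Rplus_le_le_0_compat; apply Rle_0_sqr.
Qed.

Section CcwEdge.
Variables a b c : pt.
Hypothesis Habc : ccw_xy a b c.

Lemma ccw_xy_pdist_sq : pdist b a ^ 2 = (px b - px a) ^ 2 + (py b - py a) ^ 2.
Proof.
  destruct Habc as (Ha & Hb & _); rewrite pdist_sq.
  unfold dot, vsub; simpl; rewrite Ha, Hb; ring.
Qed.

Lemma ccw_xy_pdist_pos : 0 < pdist b a.
Proof.
  apply sqrt_lt_R0; rewrite <- pdist_sq, ccw_xy_pdist_sq.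
  destruct Habc as (_ & _ & _ & HD); revert HD.
  unfold cross, vsub; simpl; intros HD.
  set (X := px b - px a) in *; set (Y := py b - py a) in *.
  assert (HXY : X <> 0 \/ Y <> 0).
  { destruct (Req_dec X 0) as [HX|HX]; [|now left].
    right; intros HY; rewrite HX, HY in HD; lra. }
  pose proof (Rle_0_sqr X); pose proof (Rle_0_sqr Y).
  destruct HXY as [HX|HY]; [pose proof (Rsqr_pos_lt X HX) | pose proof (Rsqr_pos_lt Y HY)];
    unfold Rsqr in *; lra.
Qed.

Lemma ccw_xy_perp_toward :
  perp_toward a b c = vscal (/ pdist b a) (Pt (py a - py b) (px b - px a) 0).
Proof.
  pose proof ccw_xy_pdist_pos as Hd; pose proof ccw_xy_pdist_sq as Hd2.
  destruct Habc as (Ha & Hb & Hc & HD).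
  set (D := pz (cross (vsub b a) (vsub c a))) in HD.
  set (J := Pt (py a - py b) (px b - px a) 0).
  unfold perp_toward; cbv zeta; rewrite <- pdist_sq.
  set (d := pdist b a) in *.
  assert (Hw : vsub (vsub c a) (vscal (dot (vsub c a) (vsub b a) / d ^ 2) (vsub b a))
               = vscal (D / d ^ 2) J).
  { rewrite Hd2; unfold D, J; destruct a, b, c; simpl in *; subst.
    unfold vsub, vscal, dot, cross; simpl; f_equal; field; nra. }
  assert (Hn : vnorm (vscal (D / d ^ 2) J) = D / d).
  { unfold vnorm; rewrite <- (sqrt_pow2 (D / d)) by (apply Rlt_le, Rdiv_lt_0_compat; lra).
    f_equal; transitivity ((D / d ^ 2) ^ 2 * d ^ 2).
    - rewrite Hd2; unfold J, dot, vscal; simpl; ring.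
    - field; lra. }
  rewrite Hw, Hn; unfold vscal; simpl; f_equal; field; lra.
Qed.

Lemma ccw_xy_dd :
  dd (pdist b a) (pdist c b) (pdist a c) = 2 * pz (cross (vsub b a) (vsub c a)).
Proof.
  destruct Habc as (Ha & Hb & Hc & HD).
  unfold dd; rewrite <- (sqrt_pow2 (2 * pz (cross (vsub b a) (vsub c a)))) by lra; f_equal.
  replace (pdist b a ^ 4) with ((pdist b a ^ 2) ^ 2) by ring.
  replace (pdist c b ^ 4) with ((pdist c b ^ 2) ^ 2) by ring.
  replace (pdist a c ^ 4) with ((pdist a c ^ 2) ^ 2) by ring.
  rewrite !pdist_sq; unfold dot, cross, vsub; simpl; rewrite Ha, Hb, Hc; ring.
Qed.
End CcwEdge.

Definition apex (a b c : pt) (th : R) : pt :=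
  vadd (midpoint a b)
    (vscal (/ 2 * sqrt (4 - pdist b a ^ 2))
       (vadd (vscal (cos th) (perp_toward a b c)) (vscal (sin th) ez))).

Section ApexVolumes.
Variables (a b c : pt) (th1 th2 th3 : R).
Hypothesis Habc : ccw_xy a b c.

Ltac expand_apexes :=
  unfold apex; cbv zeta;
  rewrite ccw_xy_dd, (ccw_xy_perp_toward a b c), (ccw_xy_perp_toward b c a) by auto using ccw_xy_rot;
  pose proof (ccw_xy_pdist_pos a b c Habc) as Hd1;
  pose proof (ccw_xy_pdist_pos b c a (ccw_xy_rot _ _ _ Habc)) as Hd2;
  pose proof (ccw_xy_pdist_sq a b c Habc) as E1;
  pose proof (ccw_xy_pdist_sq b c a (ccw_xy_rot _ _ _ Habc)) as E2;
  pose proof (ccw_xy_pdist_sq c a b (ccw_xy_rot _ _ _ (ccw_xy_rot _ _ _ Habc))) as E3;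
  generalize (sqrt (4 - pdist b a ^ 2)) (sqrt (4 - pdist c b ^ 2)); intros S1 S2;
  rewrite ?E1, ?E2, ?E3;
  generalize dependent (pdist b a); generalize dependent (pdist c b);
  generalize dependent (pdist a c); intros d3 E3 d2 Hd2 E2 d1 Hd1 E1;
  destruct Habc as (Ha & Hb & Hc & _);
  destruct a, b, c; cbn [Defs.px Defs.py Defs.pz] in Ha, Hb, Hc, E1, E2, E3; subst;
  unfold signed_vol, dot, cross, vsub, vadd, vscal, midpoint, ez; simpl;
  field_simplify_eq; [|lra];
  (* split the powers d^3, d^4 so that every d^2 can be replaced by its coordinates *)
  repeat match goal with |- context [?d ^ S (S (S ?n))] =>
    replace (d ^ S (S (S n))) with (d ^ 2 * d ^ S n) by ring end;
  rewrite ?E1, ?E2, ?E3; ring.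

Lemma f3_apex :
  f3 (pdist b a) (pdist c b) (pdist a c) th1 th2 th3 =
  8 * pdist b a * pdist c b * signed_vol a (apex a b c th1) (apex b c a th2) c.
Proof. unfold f3; expand_apexes. Qed.

Lemma g3_apex :
  g3 (pdist b a) (pdist c b) (pdist a c) th1 th2 th3 * (pdist c b * sqrt (4 - pdist c b ^ 2)) =
  4 * signed_vol (apex b c a th2) c (apex a b c th1) b.
Proof. unfold g3; expand_apexes. Qed.

Lemma hh3_apex :
  hh3 (pdist b a) (pdist c b) (pdist a c) th1 th2 th3 * (pdist b a * sqrt (4 - pdist b a ^ 2)) =
  - 4 * signed_vol a (apex a b c th1) b (apex b c a th2).
Proof. unfold hh3; expand_apexes. Qed.

End ApexVolumes.

Lemma fgh3_pos a b c th1 th2 th3 :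
  ccw_xy a b c -> 0 < pdist b a < 2 -> 0 < pdist c b < 2 ->
  seg_tri_sign a (apex a b c th1) b (apex b c a th2) c = 1%Z ->
  0 < f3 (pdist b a) (pdist c b) (pdist a c) th1 th2 th3 /\
  0 < g3 (pdist b a) (pdist c b) (pdist a c) th1 th2 th3 /\
  0 < hh3 (pdist b a) (pdist c b) (pdist a c) th1 th2 th3.
Proof.
  intros Habc Hd1 Hd2 Hk.
  destruct (seg_tri_sign_pos_vols _ _ _ _ _ Hk) as (Vh & Vf & Vg).
  assert (S1 : 0 < pdist b a * sqrt (4 - pdist b a ^ 2))
    by (apply Rmult_lt_0_compat; [lra | apply sqrt_lt_R0; nra]).
  assert (S2 : 0 < pdist c b * sqrt (4 - pdist c b ^ 2))
    by (apply Rmult_lt_0_compat; [lra | apply sqrt_lt_R0; nra]).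
  pose proof (g3_apex a b c th1 th2 th3 Habc) as Eg.
  pose proof (hh3_apex a b c th1 th2 th3 Habc) as Eh.
  rewrite (f3_apex a b c th1 th2 th3 Habc).
  repeat split.
  - repeat apply Rmult_lt_0_compat; lra.
  - apply (Rmult_lt_reg_r _ _ _ S2); rewrite Rmult_0_l, Eg; lra.
  - apply (Rmult_lt_reg_r _ _ _ S1); rewrite Rmult_0_l, Eh; lra.
Qed.

Lemma dd_rot d1 d2 d3 : dd d2 d3 d1 = dd d1 d2 d3.
Proof. unfold dd; f_equal; ring. Qed.

Lemma fgh1_rot d1 d2 d3 t1 t2 t3 :
  f1 d1 d2 d3 t1 t2 t3 = f3 d2 d3 d1 t2 t3 t1 /\
  g1 d1 d2 d3 t1 t2 t3 = g3 d2 d3 d1 t2 t3 t1 /\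
  hh1 d1 d2 d3 t1 t2 t3 = hh3 d2 d3 d1 t2 t3 t1.
Proof.
  unfold f1, g1, hh1, f3, g3, hh3; cbv zeta; unfold Rdiv; rewrite (dd_rot d1 d2 d3).
  repeat split; ring.
Qed.

Lemma fgh2_rot d1 d2 d3 t1 t2 t3 :
  f2 d1 d2 d3 t1 t2 t3 = f3 d3 d1 d2 t3 t1 t2 /\
  g2 d1 d2 d3 t1 t2 t3 = g3 d3 d1 d2 t3 t1 t2 /\
  hh2 d1 d2 d3 t1 t2 t3 = hh3 d3 d1 d2 t3 t1 t2.
Proof.
  unfold f2, g2, hh2, f3, g3, hh3; cbv zeta; unfold Rdiv.
  rewrite (dd_rot d2 d3 d1), (dd_rot d1 d2 d3).
  replace (2 * d3 * d1) with (2 * d1 * d3) by ring.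
  repeat split; ring.
Qed.

Theorem mainTheorem4 (H : hexagon) (d1 d2 d3 t1 t2 t3 : R) :
  equilateral H -> embedded H -> standard_position H ->
  ~ collinear (h1 H) (h3 H) (h5 H) ->
  d1 = pdist (h3 H) (h1 H) -> d2 = pdist (h5 H) (h3 H) -> d3 = pdist (h1 H) (h5 H) ->
  0 < d1 < 2 -> 0 < d2 < 2 -> 0 < d3 < 2 ->
  0 <= t1 < 2 * PI -> 0 <= t2 < 2 * PI -> 0 <= t3 < 2 * PI ->
  angle_rel (h1 H) (h3 H) (h5 H) (h2 H) t1 ->
  angle_rel (h3 H) (h5 H) (h1 H) (h4 H) t2 ->
  angle_rel (h5 H) (h1 H) (h3 H) (h6 H) t3 ->
  JCC H = (1%Z, 1%Z) ->
  0 < f1 d1 d2 d3 t1 t2 t3 /\ 0 < g1 d1 d2 d3 t1 t2 t3 /\ 0 < hh1 d1 d2 d3 t1 t2 t3 /\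
  0 < f2 d1 d2 d3 t1 t2 t3 /\ 0 < g2 d1 d2 d3 t1 t2 t3 /\ 0 < hh2 d1 d2 d3 t1 t2 t3 /\
  0 < f3 d1 d2 d3 t1 t2 t3 /\ 0 < g3 d1 d2 d3 t1 t2 t3 /\ 0 < hh3 d1 d2 d3 t1 t2 t3.
Proof.
  intros _ _ Hstd _ -> -> -> Hd1 Hd2 Hd3 _ _ _ E2 E4 E6 HJ.
  pose proof (standard_position_ccw_xy H Hstd) as T1.
  destruct (JCC_one H HJ) as [Hcurl Hprod].
  destruct H as [v1 v2 v3 v4 v5 v6]; cbn [h1 h2 h3 h4 h5 h6] in *.
  rewrite Delta2_hex, Delta4_hex, Delta6_hex in Hprod.
  destruct (hexagon_crossings _ _ _ _ _ _ Hcurl Hprod) as (C2 & C4 & C6).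
  change (v2 = apex v1 v3 v5 t1) in E2; change (v4 = apex v3 v5 v1 t2) in E4;
    change (v6 = apex v5 v1 v3 t3) in E6; subst v2 v4 v6.
  pose proof (ccw_xy_rot _ _ _ T1) as T2; pose proof (ccw_xy_rot _ _ _ T2) as T3.
  destruct (fgh3_pos _ _ _ t1 t2 t3 T1 Hd1 Hd2 C2) as (F3 & G3 & K3).
  destruct (fgh3_pos _ _ _ t2 t3 t1 T2 Hd2 Hd3 C4) as (F1 & G1 & K1).
  destruct (fgh3_pos _ _ _ t3 t1 t2 T3 Hd3 Hd1 C6) as (F2 & G2 & K2).
  destruct (fgh1_rot (pdist v3 v1) (pdist v5 v3) (pdist v1 v5) t1 t2 t3) as (-> & -> & ->).
  destruct (fgh2_rot (pdist v3 v1) (pdist v5 v3) (pdist v1 v5) t1 t2 t3) as (-> & -> & ->).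
  tauto.
Qed.
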